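(* In the setting below, suppose the tight disturbance bound assumption and the persistent excitation assumption hold, and let $\Theta_t$ be the fixed-complexity parameter set with periodic update. Then for every $\epsilon>0$, every $\theta\in\Theta_0$ such that $[M_\Theta]_i(\theta-\theta^\ast)\ge\epsilon$ for some $i\in\{1,\dots,r\}$, and every $t\in\mathbb{N}_{\ge0}$, $$\Pr\{\theta\in\Theta_t\}\ \le\ \Bigl\{1-\Bigl[p_w\Bigl(\frac{\epsilon\beta}{N_u\tau}\Bigr)\Bigr]^{N_u}\Bigr\}^{\lfloor t/N_u\rfloor}.$$
   Context: Setting: $\theta^\ast\in\mathbb{R}^p$ is a fixed (unknown) parameter vector. $\mathcal{W}=\{w\in\mathbb{R}^{n_x}:\Pi_w w\le\pi_w\}$ is a compact convex polytope with $\pi_w>0$. The disturbances $w_0,w_1,\dots$ are independent random vectors with $w_t\in\mathcal{W}$ for all $t$. $D_0,D_1,\dots\in\mathbb{R}^{n_x\times p}$ is a given (non-random) sequence of regressor matrices. For $t\ge1$ the (random) unfalsified parameter set is $\Delta_t=\{\theta\in\mathbb{R}^p: D_{t-1}(\theta^\ast-\theta)+w_{t-1}\in\mathcal{W}\}$. $\|\cdot\|$ is the Euclidean norm (induced 2-norm for matrices); $\partial\mathcal{W}$ is the boundary of $\mathcal{W}$; $[M]_i$ is the $i$th row of $M$. Tight disturbance bound assumption: there is a function $p_w:(0,\infty)\to(0,1]$ such that for all $w^0\in\partial\mathcal{W}$, all $\epsilon>0$ and all $t\ge0$, $\Pr\{\|w_t-w^0\|<\epsilon\}\ge p_w(\epsilon)$.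 Persistent excitation assumption: there exist $\tau>0$, $\beta>0$ and an integer $N_u\ge\lceil p/n_x\rceil$ such that for every $t\ge0$, $\|D_t\|\le\tau$ and $\sum_{j=t}^{t+N_u-1}D_j^\top D_j\succeq\beta I$. Fixed-complexity parameter set with periodic update: $M_\Theta\in\mathbb{R}^{r\times p}$ has rows of unit Euclidean norm and is such that $\Theta(\mu):=\{\theta:M_\Theta\theta\le\mu\}$ is bounded for every $\mu\in\mathbb{R}^r$; $\Theta_0=\Theta(\mu_0)$ contains $\theta^\ast$. For $t\ge1$: if $t=kN_u$ for some integer $k\ge1$, then $\Theta_t=\Theta(\mu_t)$ with $[\mu_t]_i=\max\{[M_\Theta]_i\theta:\theta\in\Theta_{t-N_u}\cap\bigcap_{j=t-N_u+1}^t\Delta_j\}$ for $i=1,\dots,r$ (the smallest set of the form $\Theta(\mu)$ containing that intersection); otherwise $\Theta_t=\Theta_{t-1}$. *)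

From HB Require Import structures.
From mathcomp Require Import all_boot all_order all_algebra.
From mathcomp Require Import all_classical all_reals all_analysis.
Import Order.TTheory GRing.Theory Num.Theory numFieldNormedType.Exports numFieldTopology.Exports.

Set Implicit Arguments.
Unset Strict Implicit.
Unset Printing Implicit Defensive.

Local Open Scope classical_set_scope.
Local Open Scope ring_scope.

Section Defs.
Variable R : realType.

(* Euclidean norm of a vector (written for any matrix; used on column and row
   vectors only, where it is the Euclidean norm). *)
Definition vnorm (m n : nat) (A : 'M[R]_(m, n)) : R :=
  Num.sqrt (\sum_(i < m) \sum_(j < n) A i j ^+ 2).

Definition opnorm2 (m n : nat) (A : 'M[R]_(m, n)) : R :=
  sup [set vnorm (A *m v) | v in [set v : 'cV[R]_n | vnorm v <= 1]].

Definition psd_ge (n : nat) (A : 'M[R]_n) (b : R) : Prop :=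
  forall v : 'cV[R]_n, 0 <= ((v^T *m (A - b%:M) *m v) 0 0).

Definition polytope (q n : nat) (Pi : 'M[R]_(q, n)) (pi : 'cV[R]_q)
  : set 'cV[R]_n := [set w | forall k, (Pi *m w) k 0 <= pi k 0].

Definition boundary (n : nat) (A : set 'cV[R]_n) : set 'cV[R]_n :=
  closure A `\` interior A.

Definition ThetaSet (r p : nat) (M : 'M[R]_(r, p)) (mu : 'cV[R]_r)
  : set 'cV[R]_p := [set th | forall i, (M *m th) i 0 <= mu i 0].

Definition borel_cv (n : nat) : set (set 'cV[R]_n) :=
  <<s [set U : set 'cV[R]_n | open U] >>.

Definition is_max (A : set R) (x : R) : Prop :=
  A x /\ forall y, A y -> y <= x.

Section Prob.
Context {d : measure_display} {Omega : measurableType d}.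

Definition random_vector (n : nat) (X : Omega -> 'cV[R]_n) : Prop :=
  forall B, borel_cv B -> measurable (X @^-1` B).

Definition independent_rvecs (P : probability Omega R) (n : nat)
  (w : nat -> Omega -> 'cV[R]_n) : Prop :=
  forall s : seq nat, uniq s ->
  forall B : nat -> set 'cV[R]_n, (forall i, i \in s -> borel_cv (B i)) ->
  P (\bigcap_(i in [set` s]) (w i @^-1` B i)) =
  (\prod_(i <- s) P (w i @^-1` B i))%E.

(* unfalsified set Delta_j (j >= 1) *)
Definition Delta (q nx p : nat) (Pi : 'M[R]_(q, nx)) (pi : 'cV[R]_q)
  (D : nat -> 'M[R]_(nx, p)) (thstar : 'cV[R]_p)
  (w : nat -> Omega -> 'cV[R]_nx) (j : nat) (om : Omega) : set 'cV[R]_p :=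
  [set th | polytope Pi pi (D j.-1 *m (thstar - th) + w j.-1 om)].

End Prob.
End Defs.

(* Fix [i] with [eps <= [M]_i (th - thstar)] and put [g := [M]_i^T].  Persistent excitation
   makes the Gram matrix of every block of [N_u] regressors at least [beta I], so it maps some
   [v] with [beta |v| <= 1] to [g].  For each time [j] of the block choose a boundary point
   [w0 j] of [W] minimising [<D_j v, .>].  If all disturbances of the block are within
   [eps' = eps beta / (N_u tau)] of these points, every parameter unfalsified by the block has
   [<g, . - thstar>] below [eps], so the update pushes [mu_i] below [[M]_i th] and [th] is
   discarded for good.  By the tight bound and independence, each of the [t / N_u] complete
   blocks does this with probability at least [p_w eps' ^ N_u], independently of the others.
   The event [th \in Theta_t] is measurable since each update value [mu_i] is the optimum of a
   finite linear program, whose feasibility can be tested at countably many rational points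
   once the constraints are relaxed, by compactness of the sets [Theta(mu)]. *)

From HB Require Import structures.
From mathcomp Require Import all_boot all_order all_algebra.
From mathcomp Require Import all_classical all_reals all_analysis.
From mathcomp Require Import ring lra zify.
Import Order.TTheory GRing.Theory Num.Theory numFieldNormedType.Exports numFieldTopology.Exports.

Set Implicit Arguments.
Unset Strict Implicit.
Unset Printing Implicit Defensive.

Local Open Scope classical_set_scope.
Local Open Scope ring_scope.

Section Euclid.
Variable R : realType.
Implicit Types (m n : nat).

Definition dotv n (x y : 'cV[R]_n) : R := \sum_i x i 0 * y i 0.

Lemma dotvE n (x y : 'cV[R]_n) : dotv x y = (x^T *m y) 0 0.
Proof. by rewrite mxE; apply: eq_bigr => i _; rewrite mxE. Qed.

Lemma dotvC n (x y : 'cV[R]_n) : dotv x y = dotv y x.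
Proof. by apply: eq_bigr => i _; rewrite mulrC. Qed.

Lemma dotv0l n (y : 'cV[R]_n) : dotv 0 y = 0.
Proof. by rewrite /dotv big1 // => i _; rewrite mxE mul0r. Qed.

Lemma dotvDr n (g x y : 'cV[R]_n) : dotv g (x + y) = dotv g x + dotv g y.
Proof. by rewrite /dotv -big_split; apply: eq_bigr => i _; rewrite !mxE mulrDr. Qed.

Lemma dotvZr n (g x : 'cV[R]_n) (a : R) : dotv g (a *: x) = a * dotv g x.
Proof. by rewrite /dotv mulr_sumr; apply: eq_bigr => i _; rewrite !mxE mulrCA. Qed.

Lemma dotvNr n (g x : 'cV[R]_n) : dotv g (- x) = - dotv g x.
Proof. by rewrite -scaleN1r dotvZr mulN1r. Qed.

Lemma dotvBr n (g x y : 'cV[R]_n) : dotv g (x - y) = dotv g x - dotv g y.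
Proof. by rewrite dotvDr dotvNr. Qed.

Lemma dotvNl n (x y : 'cV[R]_n) : dotv (- x) y = - dotv x y.
Proof. by rewrite dotvC dotvNr dotvC. Qed.

Lemma dotv_trmx_mul m n (A : 'M[R]_(m, n)) (x : 'cV[R]_m) (y : 'cV[R]_n) :
  dotv (A^T *m x) y = dotv x (A *m y).
Proof. by rewrite !dotvE trmx_mul trmxK mulmxA. Qed.

Lemma dotv_ge0 n (x : 'cV[R]_n) : 0 <= dotv x x.
Proof. by apply: sumr_ge0 => i _; rewrite -expr2 sqr_ge0. Qed.

Lemma dotv_eq0 n (x : 'cV[R]_n) : dotv x x = 0 -> x = 0.
Proof.
move=> x0; apply/matrixP => i j; rewrite (ord1 j) mxE.
have sq_ge0 k : true -> 0 <= x k 0 * x k 0 by rewrite -expr2 sqr_ge0.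
by have /eqP := psumr_eq0P sq_ge0 x0 (i := i) isT; rewrite mulf_eq0 orbb => /eqP.
Qed.

Lemma dotv_gt0 n (x : 'cV[R]_n) : x != 0 -> 0 < dotv x x.
Proof. by move=> x0; rewrite lt_def dotv_ge0 andbT; apply: contra_neq x0 => /dotv_eq0. Qed.

Lemma delta_mx_neq0 n (i : 'I_n) : delta_mx i 0 != 0 :> 'cV[R]_n.
Proof. by apply/eqP => /matrixP /(_ i 0); rewrite !mxE !eqxx => /eqP; rewrite oner_eq0. Qed.

Lemma row_mulmxE m n (A : 'M[R]_(m, n)) i (y : 'cV[R]_n) :
  (A *m y) i 0 = dotv (row i A)^T y.
Proof. by rewrite mxE; apply: eq_bigr => j _; rewrite !mxE. Qed.

Lemma dotv_sqr_le n (x y : 'cV[R]_n) : dotv x y ^+ 2 <= dotv x x * dotv y y.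
Proof.
set a := dotv x x; set b := dotv x y; set c := dotv y y.
have [x0|x_neq0] := eqVneq x 0.
  by rewrite /b /a x0 !dotv0l expr2 !mul0r.
have a_gt0 : 0 < a := dotv_gt0 x_neq0.
have sum_sqr : \sum_i (a * y i 0 - b * x i 0) ^+ 2 = a * (a * c - b ^+ 2).
  rewrite (eq_bigr (fun i => a ^+ 2 * (y i 0 * y i 0) - (2 * a * b) * (x i 0 * y i 0)
     + b ^+ 2 * (x i 0 * x i 0))); last by move=> i _; ring.
  rewrite big_split /= sumrB -!mulr_sumr -/(dotv y y) -/(dotv x y) -/(dotv x x) -/a -/b -/c.
  ring.
have : 0 <= a * (a * c - b ^+ 2).
  by rewrite -sum_sqr; apply: sumr_ge0 => i _; apply: sqr_ge0.
by rewrite pmulr_rge0 // subr_ge0.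
Qed.

Lemma vnormE n (x : 'cV[R]_n) : vnorm x = Num.sqrt (dotv x x).
Proof. by congr Num.sqrt; apply: eq_bigr => i _; rewrite big_ord1 expr2. Qed.

Lemma vnorm_ge0 m n (A : 'M[R]_(m, n)) : 0 <= vnorm A.
Proof. exact: sqrtr_ge0. Qed.

Lemma vnorm0 n : vnorm (0 : 'cV[R]_n) = 0.
Proof. by rewrite vnormE dotv0l sqrtr0. Qed.

Lemma vnorm_gt0 n (x : 'cV[R]_n) : x != 0 -> 0 < vnorm x.
Proof. by move=> x0; rewrite vnormE sqrtr_gt0 dotv_gt0. Qed.

Lemma vnorm_gt0_ncols m n (A : 'M[R]_(m, n)) : 0 < vnorm A -> (0 < n)%N.
Proof.
case: n A => // A; rewrite /vnorm (eq_bigr (fun=> 0)) => [|i _]; last exact: big_ord0.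
by rewrite big1 // sqrtr0 ltxx.
Qed.

Lemma vnormZ n (a : R) (x : 'cV[R]_n) : vnorm (a *: x) = `|a| * vnorm x.
Proof.
rewrite !vnormE dotvZr dotvC dotvZr mulrA -expr2 -sqrtr_sqr -sqrtrM ?sqr_ge0 //.
Qed.

Lemma vnorm_trmx m n (A : 'M[R]_(m, n)) : vnorm A^T = vnorm A.
Proof.
rewrite /vnorm exchange_big; congr Num.sqrt; apply: eq_bigr => j _.
by apply: eq_bigr => i _; rewrite mxE.
Qed.

Lemma dotv_le_vnorm n (x y : 'cV[R]_n) : dotv x y <= vnorm x * vnorm y.
Proof.
rewrite !vnormE -sqrtrM ?dotv_ge0 //.
apply: le_trans (ler_norm _) _; rewrite -sqrtr_sqr ler_sqrt ?dotv_sqr_le //.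
by rewrite mulr_ge0 ?dotv_ge0.
Qed.

Lemma vnorm_mulmx_le m n (A : 'M[R]_(m, n)) (x : 'cV[R]_n) :
  vnorm (A *m x) <= vnorm A * vnorm x.
Proof.
have sum_ge0 : 0 <= \sum_(i < m) \sum_(j < n) A i j ^+ 2.
  by apply: sumr_ge0 => i _; apply: sumr_ge0 => j _; apply: sqr_ge0.
rewrite [vnorm (A *m x)]vnormE [vnorm x]vnormE /vnorm -sqrtrM //.
rewrite ler_sqrt ?mulr_ge0 ?dotv_ge0 // {1}/dotv mulr_suml; apply: ler_sum => i _.
have -> : \sum_j A i j ^+ 2 = dotv (row i A)^T (row i A)^T.
  by apply: eq_bigr => j _; rewrite !mxE expr2.
by rewrite -expr2 row_mulmxE dotv_sqr_le.
Qed.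

Lemma vnorm_mulmx_opnorm2 m n (A : 'M[R]_(m, n)) (x : 'cV[R]_n) :
  vnorm (A *m x) <= opnorm2 A * vnorm x.
Proof.
set S := [set vnorm (A *m v) | v in [set v : 'cV[R]_n | vnorm v <= 1]].
have S_sup : has_sup S.
  split; first by exists (vnorm (A *m (0 : 'cV[R]_n))); exists 0; rewrite //= vnorm0.
  exists (vnorm A) => _ [v /= v_le1 <-]; apply: le_trans (vnorm_mulmx_le _ _) _.
  by rewrite -[leRHS]mulr1 ler_wpM2l // vnorm_ge0.
have [->|x_neq0] := eqVneq x 0; first by rewrite mulmx0 !vnorm0 mulr0.
have x_gt0 := vnorm_gt0 x_neq0.
have u_le1 : vnorm ((vnorm x)^-1 *: x) <= 1.
  by rewrite vnormZ ger0_norm ?mulVf ?gt_eqF ?invr_ge0 ?vnorm_ge0.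
have : vnorm (A *m ((vnorm x)^-1 *: x)) <= opnorm2 A.
  by apply: sup_upper_bound => //; exists ((vnorm x)^-1 *: x).
rewrite -scalemxAr vnormZ ger0_norm ?invr_ge0 ?vnorm_ge0 // => Ax_le.
by rewrite -ler_pdivrMr // mulrC.
Qed.

Lemma dotv_sum_gram n p (D : nat -> 'M[R]_(n, p)) (s : seq nat) (x v : 'cV[R]_p) :
  dotv x ((\sum_(j <- s) (D j)^T *m D j) *m v) = \sum_(j <- s) dotv (D j *m x) (D j *m v).
Proof.
rewrite dotvE mulmx_suml mulmx_sumr summxE; apply: eq_bigr => j _.
by rewrite dotvE trmx_mul !mulmxA.
Qed.

Lemma psd_geP n (S : 'M[R]_n) (b : R) :
  psd_ge S b <-> forall v, b * dotv v v <= dotv v (S *m v).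
Proof.
have quad v : (v^T *m (S - b%:M) *m v) 0 0 = dotv v (S *m v) - b * dotv v v.
  by rewrite mulmxBr mulmxBl mul_mx_scalar -scalemxAl -mulmxA !dotvE !mxE.
by split=> psdS v; have := psdS v; rewrite quad subr_ge0.
Qed.

Lemma psd_ge_unitmx n (S : 'M[R]_n) (b : R) : 0 < b -> psd_ge S b -> S \in unitmx.
Proof.
move=> b_gt0 /psd_geP psdS; rewrite unitmxE unitfE; apply/negP => /det0P [v v_neq0 vS0].
have := psdS v^T; rewrite [dotv _ (S *m _)]dotvE trmxK mulmxA vS0 mul0mx mxE.
rewrite pmulr_rle0 // leNgt dotv_gt0 //.
by apply: contra_neq v_neq0 => /(congr1 trmx); rewrite trmxK trmx0.
Qed.

Lemma psd_ge_solve n (S : 'M[R]_n) (b : R) (g : 'cV[R]_n) : 0 < b -> psd_ge S b ->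
  exists v, S *m v = g /\ b * vnorm v <= vnorm g.
Proof.
move=> b_gt0 psdS; set v := invmx S *m g.
have Sv : S *m v = g by rewrite mulmxA mulmxV ?mul1mx // (psd_ge_unitmx b_gt0).
exists v; split => //.
have [->|v_neq0] := eqVneq v 0; first by rewrite vnorm0 mulr0 vnorm_ge0.
have v_gt0 := vnorm_gt0 v_neq0.
rewrite -(ler_pM2r v_gt0) -mulrA -expr2 vnormE sqr_sqrtr ?dotv_ge0 // -vnormE [X in _ <= X]mulrC.
apply: le_trans (dotv_le_vnorm v g); rewrite -Sv.
exact: (psd_geP S b).1.
Qed.

Lemma psd_ge_neq0 n (S : 'M[R]_n) (b : R) : (0 < n)%N -> 0 < b -> psd_ge S b -> S != 0.
Proof.
case: n S => // n S _ b_gt0 psdS; apply/eqP => S0.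
have := (psd_geP S b).1 psdS (delta_mx 0 0); rewrite S0 mul0mx.
by rewrite dotvC dotv0l pmulr_rle0 // leNgt dotv_gt0 ?delta_mx_neq0.
Qed.

Lemma gram_sum_psd_dims n p (D : nat -> 'M[R]_(n, p)) t N (b : R) : (0 < p)%N -> 0 < b ->
  psd_ge (\sum_(t <= j < t + N) (D j)^T *m D j) b -> (0 < N)%N && (0 < n)%N.
Proof.
move=> p_gt0 b_gt0 /(psd_ge_neq0 p_gt0 b_gt0); case: n D => [|n] D S_neq0.
  by move: S_neq0; rewrite big1 ?eqxx // => j _; rewrite [D j]flatmx0 mulmx0.
rewrite andbT lt0n; apply: contraNneq S_neq0 => N0.
by rewrite N0 addn0 big_geq.
Qed.

End Euclid.

Section Topology.
Variable R : realType.

Lemma continuous_mulmx_entry m n (A : 'M[R]_(m, n)) (l : 'I_m) :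
  continuous (fun x : 'cV[R]_n => (A *m x) l 0).
Proof.
have -> : (fun x : 'cV[R]_n => (A *m x) l 0) = (fun x => \sum_(j < n) A l j * x j 0).
  by apply: funext => x; rewrite mxE.
apply: continuous_big; first exact: add_continuous.
move=> j _ x; apply: (@continuousM _ _ (fun=> A l j) (fun x : 'cV[R]_n => x j 0)).
  exact: cst_continuous.
exact: coord_continuous.
Qed.

Lemma vnorm_continuous m n : continuous (fun A : 'M[R]_(m, n) => vnorm A).
Proof.
move=> A; apply: (@continuous_comp _ _ _ (fun A : 'M[R]_(m, n) => \sum_i \sum_j A i j ^+ 2)
  (@Num.sqrt R)); last exact: sqrt_continuous.
rewrite (_ : (fun A : 'M[R]_(m, n) => _) = (fun A => \sum_i \sum_j A i j * A i j)); last first.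
  by apply: funext => B; apply: eq_bigr => i _; apply: eq_bigr => j _; rewrite expr2.
apply: continuous_big; first exact: add_continuous.
move=> i _ B; apply: continuous_big; first exact: add_continuous.
by move=> j _ C; apply: continuousM; exact: coord_continuous.
Qed.

Lemma closed_le_continuous (T : topologicalType) (f : T -> R) (a : R) :
  continuous f -> closed [set x | f x <= a].
Proof.
move=> f_cont; change (closed (f @^-1` [set y | y <= a])).
by apply: preimage_closed; [move=> x _; exact: f_cont|exact: closed_le].
Qed.

Lemma closed_ge_continuous (T : topologicalType) (f : T -> R) (a : R) :
  continuous f -> closed [set x | a <= f x].
Proof.
move=> f_cont; change (closed (f @^-1` [set y | a <= y])).
by apply: preimage_closed; [move=> x _; exact: f_cont|exact: closed_ge].
Qed.

Lemma open_vnorm_ball n (y : 'cV[R]_n) (e : R) : open [set x | vnorm (x - y) < e].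
Proof.
change (open ((fun x => vnorm (x - y)) @^-1` [set z | z < e])).
apply: open_comp; last exact: open_lt.
move=> x _; apply: (@continuous_comp _ _ _ (fun x : 'cV[R]_n => x - y) (fun x => vnorm x)).
  by apply: (@continuousB _ _ _ id (fun=> y)); [exact: cvg_id|exact: cst_continuous].
exact: vnorm_continuous.
Qed.

Lemma borel_cv_open n (U : set 'cV[R]_n) : open U -> borel_cv U.
Proof. by move=> oU; apply: sub_gen_smallest. Qed.

Lemma borel_cv_closed n (U : set 'cV[R]_n) : closed U -> borel_cv U.
Proof.
move=> cU; rewrite -(setCK U); apply: sigma_algebraC.
by apply: borel_cv_open; exact: closed_openC.
Qed.

Lemma dotv_continuous n (g : 'cV[R]_n) : continuous (fun x => dotv g x).
Proof.
rewrite (_ : (fun x => dotv g x) = fun x => (g^T *m x) 0 0).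
  exact: continuous_mulmx_entry.
by apply: funext => x; rewrite dotvE.
Qed.

Lemma exists_dotv_argmin n (W : set 'cV[R]_n) (g : 'cV[R]_n) : W !=set0 -> compact W ->
  exists2 w0, W w0 & forall w, W w -> dotv g w0 <= dotv g w.
Proof.
move=> W0 cW.
have [|w0 /set_mem Ww0 w0_max] := @compact_EVT_max _ R (fun w => - dotv g w) W W0 cW.
  by apply: continuous_subspaceT => x; apply: continuousN; exact: dotv_continuous.
by exists w0 => // w Ww; have := w0_max w (mem_set Ww); rewrite lerN2.
Qed.

(* moving from [w0] a little in the direction [-g] strictly decreases [dotv g] *)
Lemma dotv_argmin_boundary n (W : set 'cV[R]_n) (g w0 : 'cV[R]_n) : g != 0 -> W w0 ->
  (forall w, W w -> dotv g w0 <= dotv g w) -> boundary W w0.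
Proof.
move=> g_neq0 Ww0 w0_min; split; first exact: subset_closure.
move=> /nbhs_ballP [e /= e_gt0 ballW].
set de := e / (`|g| + 1).
have norm_gt0 : 0 < `|g| + 1 by rewrite ltr_wpDl.
have de_gt0 : 0 < de by rewrite divr_gt0.
have de_e : de * `|g| + de = e by rewrite -[de in _ + de]mulr1 -mulrDr divfK ?gt_eqF.
have : W (w0 - de *: g).
  apply: ballW; rewrite -ball_normE /= opprB addrC subrK normrZ gtr0_norm //.
  change (de * `|g| < e); lra.
move/w0_min; rewrite dotvBr dotvZr.
by have := mulr_gt0 de_gt0 (dotv_gt0 g_neq0); lra.
Qed.

Lemma exists_boundary_dotv_argmin n (W : set 'cV[R]_n) (g : 'cV[R]_n) : (0 < n)%N ->
  W !=set0 -> compact W ->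
  exists w0, boundary W w0 /\ forall w, W w -> dotv g w0 <= dotv g w.
Proof.
case: n W g => // n W g _ W0 cW.
have [g0|g_neq0] := eqVneq g 0.
  have [w0 Ww0 w0_min] := exists_dotv_argmin (delta_mx 0 0) W0 cW.
  exists w0; split => [|w _]; last by rewrite g0 !dotv0l.
  exact: dotv_argmin_boundary (@delta_mx_neq0 R _ 0) Ww0 w0_min.
have [w0 Ww0 w0_min] := exists_dotv_argmin g W0 cW.
by exists w0; split => //; exact: dotv_argmin_boundary g_neq0 Ww0 w0_min.
Qed.

Lemma trmx_norm_le m n (A : 'M[R]_(m, n)) : `|A^T| <= `|A|.
Proof.
rewrite [`|A^T|]/Num.Def.normr /= mx_normrE; apply: bigmax_le => //= ij _.
rewrite mxE [leRHS]/Num.Def.normr /= mx_normrE.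
exact: (le_bigmax _ (fun ij : 'I_m * 'I_n => `|A ij.1 ij.2|) (ij.2, ij.1)).
Qed.

Lemma trmx_continuous m n : continuous (@trmx R m n).
Proof.
move=> A S /nbhs_ballP [e e_gt0 ballS]; apply/nbhs_ballP; exists e => // B AB.
apply: ballS; move: AB; rewrite -!ball_normE /=; apply: le_lt_trans.
by rewrite -linearB; exact: trmx_norm_le.
Qed.

Lemma mx_norm_le_vnorm m n (A : 'M[R]_(m, n)) : `|A| <= vnorm A.
Proof.
have sqr_sum_ge0 (k : 'I_m) : 0 <= \sum_l A k l ^+ 2 by apply: sumr_ge0 => l _; apply: sqr_ge0.
rewrite [`|A|]/Num.Def.normr /= mx_normrE; apply: bigmax_le => [|[i j] _] /=.
  exact: vnorm_ge0.
rewrite -sqrtr_sqr ler_sqrt; last by apply: sumr_ge0 => k _.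
rewrite (bigD1 i) //= (bigD1 j) //= -addrA lerDl addr_ge0 //.
  by apply: sumr_ge0 => l _; apply: sqr_ge0.
by apply: sumr_ge0 => k _.
Qed.

Lemma bounded_closed_cV_compact p (A : set 'cV[R]_p) (C : R) :
  (forall x, A x -> vnorm x <= C) -> closed A -> compact A.
Proof.
move=> A_le cA; have -> : A = trmx @` [set y : 'rV[R]_p | A y^T].
  by apply/seteqP; split => [x Ax|_ [y Ay <-] //]; exists x^T; rewrite /= trmxK.
apply: continuous_compact; first by apply: continuous_subspaceT; exact: trmx_continuous.
apply: bounded_closed_compact; last by apply: preimage_closed => // x _; exact: trmx_continuous.
apply: filterS (nbhs_pinfty_ge (num_real C)) => c Cc y Ay.
apply: le_trans Cc; apply: le_trans (A_le _ Ay).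
by apply: le_trans (mx_norm_le_vnorm _); rewrite -[in leLHS](trmxK y) trmx_norm_le.
Qed.

Lemma nested_closed_compact_inter (T : ptopologicalType) (K : set T) (F : nat -> set T) :
  compact K -> (forall n, closed (F n)) -> (forall n, F n `<=` K) ->
  (forall n m, (n <= m)%N -> F m `<=` F n) -> (forall n, F n !=set0) ->
  exists x, forall n, F n x.
Proof.
move=> cK cF FK Fdec Fne; move: cK; rewrite compact_In0 => /(_ nat setT F).
case => [|D _|x Fx]; last by exists x => n; exact: Fx.
- exists F => // n _; apply/seteqP; split => [x Fx|x []//].
  by split => //; exact: FK Fx.
- have [x Fx] := Fne (\max_(i <- finmap.enum_fset D) i).
  by exists x => i iD; apply: Fdec Fx; exact: leq_bigmax_seq.
Qed.

End Topology.

Section RationalRelaxation.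
Variables (R : realType) (p : nat).

Lemma le_forall_inv_succ (a b : R) : (forall n : nat, a <= b + n.+1%:R^-1) -> a <= b.
Proof.
move=> a_le; apply/ler_addgt0Pr => e e_gt0; apply: le_trans (a_le (Num.truncn e^-1)) _.
rewrite lerD2l -[leRHS]invrK lef_pV2 ?posrE ?ltr0n ?invr_gt0 //.
exact: ltW (truncnS_gt _).
Qed.

Lemma exists_rat_approx (I : finType) (a : I -> 'cV[R]_p) (th : 'cV[R]_p) (eta : R) :
  0 < eta -> exists q : 'cV[rat]_p, forall i, `|dotv (a i) (th - map_mx ratr q)| <= eta.
Proof.
move=> eta_gt0; set C := \sum_i \sum_j `|a i j 0|.
have C_ge0 : 0 <= C by apply: sumr_ge0 => i _; apply: sumr_ge0 => j _.
set de := eta / (C + 1).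
have de_gt0 : 0 < de by rewrite divr_gt0 // ltr_wpDl.
have qP j : exists q : rat, ratr q \in `](th j 0 - de), (th j 0 + de)[.
  by apply: rat_in_itvoo; lra.
exists (\col_j xchoose (qP j)) => i.
have th_q j : `|(th - map_mx ratr (\col_j xchoose (qP j))) j 0| <= de.
  have := xchooseP (qP j); rewrite !mxE in_itv /= => /andP [q_gt q_lt].
  by rewrite ler_norml; apply/andP; split; lra.
apply: le_trans (ler_norm_sum _ _ _) _.
apply: le_trans (_ : \sum_j `|a i j 0| * de <= _).
  by apply: ler_sum => j _; rewrite normrM; apply: ler_wpM2l.
rewrite -mulr_suml; apply: le_trans (_ : C * de <= _).
  apply: ler_wpM2r; first exact: ltW.
  rewrite /C (bigD1 i) //= lerDl.
  by apply: sumr_ge0 => k _; apply: sumr_ge0 => j _.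
have : de * (C + 1) = eta by rewrite divfK // gt_eqF // ltr_wpDl.
by have := ltW de_gt0; nra.
Qed.

(* The right-hand side only quantifies over countably many rational points: this is how the
   measurability of the set updates is obtained. *)
Lemma affine_feasible_ratP (I : finType) (a : I -> 'cV[R]_p) (b : I -> R) (C : R) :
  (forall th, (forall i, dotv (a i) th <= b i + 1) -> vnorm th <= C) ->
  (exists th, forall i, dotv (a i) th <= b i) <->
  (forall n, exists q : 'cV[rat]_p, forall i, dotv (a i) (map_mx ratr q) <= b i + n.+1%:R^-1).
Proof.
move=> relax_bounded; split => [[th th_sol] n|rat_sol].
  have inv_gt0 : 0 < n.+1%:R^-1 :> R by rewrite invr_gt0 ltr0Sn.
  have [q q_approx] := exists_rat_approx a th inv_gt0.
  exists q => i; have := q_approx i; rewrite dotvBr distrC ler_distl => /andP [_ aq_le].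
  by apply: le_trans aq_le _; rewrite lerD2r th_sol.
pose F n := [set th : 'cV[R]_p | forall i, dotv (a i) th <= b i + n.+1%:R^-1].
have F_closed n : closed (F n).
  rewrite (_ : F n = \bigcap_i [set th | dotv (a i) th <= b i + n.+1%:R^-1]).
    by apply: closed_bigI => i _; apply: closed_le_continuous; exact: dotv_continuous.
  by apply/seteqP; split => [th th_F i _|th th_F i]; exact: th_F.
have F_dec n m : (n <= m)%N -> F m `<=` F n.
  move=> nm th th_F i; apply: le_trans (th_F i) _.
  by rewrite lerD2l lef_pV2 ?posrE ?ltr0n // ler_nat.
have F0_compact : compact (F 0).
  by apply: (bounded_closed_cV_compact (C := C)) => // th; rewrite /F invr1; exact: relax_bounded.
have [|th th_F] := nested_closed_compact_inter F0_compact F_closed (fun n => F_dec 0 n isT) F_dec.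
  by move=> n; have [q q_sol] := rat_sol n; exists (map_mx ratr q).
by exists th => i; apply: le_forall_inv_succ => n; exact: th_F.
Qed.

End RationalRelaxation.

Section Measurability.
Context {d : measure_display} {T : measurableType d}.

Lemma measurable_forall (I : countType) (Q : I -> set T) :
  (forall i, measurable (Q i)) -> measurable [set x | forall i, Q i x].
Proof.
move=> mQ; rewrite (_ : [set x | _] = ~` \bigcup_i ~` Q i).
  by apply/measurableC/countable_bigcupT_measurable => [|i]; [exact: countableP|exact/measurableC].
apply/seteqP; split => [x Qx [i _ /(_ (Qx i))]//|x /= nQ i].
by apply: contrapT => Qi; apply: nQ; exists i.
Qed.

Lemma measurable_exists (I : countType) (Q : I -> set T) :
  (forall i, measurable (Q i)) -> measurable [set x | exists i, Q i x].
Proof.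
move=> mQ; rewrite (_ : [set x | _] = \bigcup_i Q i).
  exact/countable_bigcupT_measurable/mQ/countableP.
by apply/seteqP; split => [x [i Qi]|x [i _ Qi]]; exists i.
Qed.

Lemma measurable_fun_geP (R : realType) (f : T -> R) :
  measurable_fun setT f <-> forall c, measurable [set x | c <= f x].
Proof.
split=> [mf c|mge].
  rewrite (_ : [set x | c <= f x] = setT `&` f @^-1` `[c, +oo[).
    exact: mf.
  by apply/seteqP; split => x /=; rewrite in_itv /= andbT // => -[].
apply: (measurability (@measurable_realfun.RGenCInfty.G R)) => [|_ [_ [c ->] <-]].
  exact: measurable_realfun.RGenCInfty.measurableE.
rewrite setTI (_ : _ @^-1` _ = [set x | c <= f x]) //.
by apply/seteqP; split => x /=; rewrite in_itv /= andbT.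
Qed.

Lemma random_vector_continuous (R : realType) n (X : T -> 'cV[R]_n) (g : 'cV[R]_n -> R) :
  random_vector X -> continuous g -> measurable_fun setT (g \o X).
Proof.
move=> rvX g_cont; apply/measurable_fun_geP => c.
apply: (rvX [set y | c <= g y]); apply: borel_cv_closed; exact: closed_ge_continuous.
Qed.

End Measurability.

Section IndependentBlocks.
Variables (R : realType) (d : measure_display) (Omega : measurableType d).
Variables (P : probability Omega R) (n : nat) (w : nat -> Omega -> 'cV[R]_n).
Variables (U : nat -> set 'cV[R]_n) (N : nat).
Hypothesis U_borel : forall j, borel_cv (U j).
Hypothesis w_rv : forall t, random_vector (w t).
Hypothesis w_indep : independent_rvecs P w.

Definition pr (A : set Omega) : R := fine (P A).

Definition hits (s : seq nat) : set Omega := \bigcap_(j in [set` s]) (w j @^-1` U j).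

Definition block_hit k : set Omega := hits (iota (k * N) N).

Definition no_block_hit K : set Omega := \bigcap_(k in `I_K) ~` block_hit k.

Lemma prE A : measurable A -> P A = (pr A)%:E.
Proof. by move=> mA; rewrite /pr fineK //; exact: fin_num_measure. Qed.

Lemma pr_le1 A : measurable A -> pr A <= 1.
Proof. by move=> mA; rewrite -lee_fin -prE //; exact: probability_le1. Qed.

Lemma prD A B : measurable A -> measurable B -> pr (A `\` B) = pr A - pr (A `&` B).
Proof.
move=> mA mB; rewrite /pr -fineB ?fin_num_measure //; last exact: measurableI.
have PA_fin : (P A < +oo)%E by rewrite prE ?ltry.
by rewrite (measureD (mu := P) mA mB PA_fin).
Qed.

Lemma hits_measurable s : measurable (hits s).
Proof. by apply: bigcap_measurableType => j _; exact: w_rv. Qed.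

Lemma no_block_hit_measurable K : measurable (no_block_hit K).
Proof. by apply: bigcap_measurableType => k _; exact/measurableC/hits_measurable. Qed.

Lemma pr_hits s : uniq s -> pr (hits s) = \prod_(j <- s) pr (w j @^-1` U j).
Proof.
move=> s_uniq; have := w_indep s_uniq (fun j _ => U_borel j).
rewrite -/(hits s) (prE (hits_measurable s)).
rewrite (eq_bigr (fun j => (pr (w j @^-1` U j))%:E)) => [|j _]; last first.
  by rewrite prE //; exact: w_rv.
by rewrite prodEFin => /eqP; rewrite eqe => /eqP.
Qed.

Lemma hits_cat s1 s2 : hits (s1 ++ s2) = hits s1 `&` hits s2.
Proof.
apply/seteqP; split => [om hit_om|om [hit1 hit2] j /=]; last first.
  by rewrite mem_cat => /orP [] js; [exact: hit1|exact: hit2].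
by split => j js; apply: hit_om; rewrite /= mem_cat js ?orbT.
Qed.

Lemma pr_no_block_hit_hits K s : uniq s -> all (leq (K * N)) s ->
  pr (no_block_hit K `&` hits s) =
  (\prod_(k < K) (1 - pr (block_hit k))) * \prod_(j <- s) pr (w j @^-1` U j).
Proof.
elim: K s => [|K IH] s s_uniq /allP s_ge.
  rewrite big_ord0 mul1r -pr_hits //; congr pr.
  by apply/seteqP; split => [om []//|om hit_om]; split => // k.
have no_hit_S : no_block_hit K.+1 `&` hits s =
    (no_block_hit K `&` hits s) `\` block_hit K.
  apply/seteqP; split => [om [no_hit hit_s]|om [[no_hit hit_s] not_hit]].
    by split; [split => // k kK; apply: no_hit => /=; exact: ltnW|apply: no_hit => /=].
  split => // k /=; rewrite ltnS leq_eqVlt => /orP [/eqP ->//|]; exact: no_hit.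
have s_ge' : all (leq (K * N)) s by apply/allP => j /s_ge; rewrite mulSn /=; lia.
have cat_uniq : uniq (iota (K * N) N ++ s).
  rewrite cat_uniq iota_uniq s_uniq andbT; apply/hasPn => j /s_ge.
  by rewrite mem_iota mulSn /=; lia.
have cat_ge : all (leq (K * N)) (iota (K * N) N ++ s).
  by rewrite all_cat s_ge' andbT; apply/allP => j; rewrite mem_iota => /andP [].
rewrite no_hit_S prD; first last.
- exact: hits_measurable.
- by apply: measurableI; [exact: no_block_hit_measurable|exact: hits_measurable].
rewrite -setIA [hits s `&` _]setIC -hits_cat (IH _ s_uniq s_ge') (IH _ cat_uniq cat_ge).
by rewrite big_cat /= big_ord_recr /= /block_hit pr_hits ?iota_uniq //; ring.
Qed.

Lemma no_block_hit_le K (a : R) : 0 <= a -> (forall j, a%:E <= P (w j @^-1` U j))%E ->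
  (P (no_block_hit K) <= ((1 - a ^+ N) ^+ K)%:E)%E.
Proof.
move=> a_ge0 a_le; have := pr_no_block_hit_hits (K := K) (s := [::]) isT isT.
rewrite big_nil mulr1 (_ : hits [::] = setT); last by apply/seteqP; split => // om _ j.
rewrite setIT (prE (no_block_hit_measurable K)) => ->; rewrite lee_fin.
rewrite -[X in _ <= _ ^+ X](card_ord K) -prodr_const; apply: ler_prod => k _.
rewrite subr_ge0 (pr_le1 (hits_measurable _)) /= lerD2l lerN2 /block_hit pr_hits ?iota_uniq //.
have -> : iota (k * N) N = index_iota (k * N) (k * N + N) by rewrite /index_iota addKn.
rewrite -[X in _ ^+ X <= _](addKn (k * N) N) -prodr_const_nat; apply: ler_prod => j _.
by rewrite a_ge0 /= -lee_fin -prE; [exact: a_le|exact: w_rv].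
Qed.

End IndependentBlocks.

Section Exclusion.
Variables (R : realType) (p nx q N : nat) (Pi : 'M[R]_(q, nx)) (pi : 'cV[R]_q).
Variables (D : nat -> 'M[R]_(nx, p)) (thstar : 'cV[R]_p).

(* [dotv g (th - thstar)] is the sum over the block of [dotv (D j (th - thstar)) (D j v)], and
   by the minimality of [w0 j] each term is at most [tau |v| |u j - w0 j|]. *)
Lemma block_consistent_dotv_lt k (g v th : 'cV[R]_p) (u w0 : nat -> 'cV[R]_nx)
    (eps beta tau : R) :
  (0 < N)%N -> 0 < eps -> 0 < beta -> 0 < tau ->
  (\sum_(k * N <= j < k * N + N) (D j)^T *m D j) *m v = g -> beta * vnorm v <= 1 ->
  (forall j (x : 'cV_p), vnorm (D j *m x) <= tau * vnorm x) ->
  (forall j z, (k * N <= j < k * N + N)%N -> polytope Pi pi z ->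
     dotv (D j *m v) (w0 j) <= dotv (D j *m v) z) ->
  (forall j, (k * N <= j < k * N + N)%N -> vnorm (u j - w0 j) < eps * beta / (N%:R * tau)) ->
  (forall j, (k * N <= j < k * N + N)%N -> polytope Pi pi (D j *m (thstar - th) + u j)) ->
  dotv g (th - thstar) < eps.
Proof.
move=> N_gt0 eps_gt0 beta_gt0 tau_gt0 Sv v_le D_le w0_min u_near th_cons.
have [v0|v_neq0] := eqVneq v 0.
  by rewrite -Sv v0 mulmx0 dotv0l.
have v_gt0 := vnorm_gt0 v_neq0.
have term_lt j : (k * N <= j < k * N + N)%N ->
    dotv (D j *m (th - thstar)) (D j *m v) < tau * vnorm v * (eps * beta / (N%:R * tau)).
  move=> j_in; have := w0_min j _ j_in (th_cons j j_in).
  rewrite dotvDr -[thstar - th]opprB mulmxN dotvNr.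
  rewrite [dotv (D j *m v) (D j *m _)]dotvC => w0_le.
  apply: le_lt_trans (_ : _ <= dotv (D j *m v) (u j - w0 j)) _; first by rewrite dotvBr; lra.
  apply: le_lt_trans (dotv_le_vnorm _ _) _.
  apply: le_lt_trans (_ : _ <= tau * vnorm v * vnorm (u j - w0 j)) _.
    by rewrite ler_wpM2r ?vnorm_ge0 ?D_le.
  by rewrite ltr_pM2l ?u_near // mulr_gt0.
rewrite dotvC -Sv dotv_sum_gram.
have block_nonempty : (k * N < k * N + N)%N by lia.
apply: lt_le_trans (ltr_sum_nat block_nonempty term_lt) _.
set e := eps * beta / (N%:R * tau).
rewrite sumr_const_nat addKn -mulr_natl.
have -> : N%:R * (tau * vnorm v * e) = eps * (beta * vnorm v).
  by rewrite /e; field; rewrite !gt_eqF ?ltr0n.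
by rewrite ler_piMr // ltW.
Qed.

End Exclusion.

Lemma divn_block N k j : (0 < N)%N -> (k * N <= j < k * N + N)%N -> (j %/ N)%N = k.
Proof.
move=> N_gt0 /andP [j_ge j_lt]; apply/eqP; rewrite eqn_leq leq_divRL // j_ge andbT.
by rewrite -ltnS ltn_divLR // mulSn addnC.
Qed.

Section Update.
Variables (R : realType) (d : measure_display) (Omega : measurableType d).
Variables (p nx q r : nat) (thstar : 'cV[R]_p) (Pi : 'M[R]_(q, nx)) (pi : 'cV[R]_q).
Variables (w : nat -> Omega -> 'cV[R]_nx) (D : nat -> 'M[R]_(nx, p)) (N : nat).
Variables (M : 'M[R]_(r, p)) (mu : nat -> Omega -> 'cV[R]_r).
Hypothesis N_gt0 : (0 < N)%N.
Hypothesis mu_update : forall om t, (exists k, (1 <= k)%N /\ t = (k * N)%N) ->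
  forall i, is_max
    [set (M *m th) i 0 | th in
      [set th | ThetaSet M (mu (t - N)%N om) th /\
                forall j, (t - N < j <= t)%N -> Delta Pi pi D thstar w j om th]]
    (mu t om i 0).
Hypothesis mu_keep : forall om t, (1 <= t)%N ->
  ~ (exists k, (1 <= k)%N /\ t = (k * N)%N) -> mu t om = mu t.-1 om.

Definition block_consistent k om (th : 'cV[R]_p) : Prop :=
  forall j, (k * N <= j < k * N + N)%N -> polytope Pi pi (D j *m (thstar - th) + w j om).

Lemma mu_update_ge_iff om k i c :
  c <= mu (k.+1 * N)%N om i 0 <->
  exists th, [/\ ThetaSet M (mu (k * N)%N om) th, block_consistent k om th &
                 c <= (M *m th) i 0].
Proof.
have [[th [th_Theta th_Delta] <-] mu_ub] := mu_update om (ex_intro _ k.+1 (conj isT erefl)) i.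
rewrite mulSn addKn in th_Theta th_Delta mu_ub.
split => [c_le|[th' [th'_Theta th'_cons c_le]]].
  exists th; split => // j /andP [j_ge j_lt].
  by apply: (th_Delta j.+1); rewrite ltnS j_ge addnC.
apply: le_trans c_le (mu_ub _ _); exists th' => //; split => // j /andP [j_gt j_le].
by apply: th'_cons; lia.
Qed.

Lemma ThetaSet_mu_excluded om k i th (v : 'cV[R]_p) (w0 : nat -> 'cV[R]_nx)
    (eps beta tau : R) :
  0 < eps -> 0 < beta -> 0 < tau ->
  (\sum_(k * N <= j < k * N + N) (D j)^T *m D j) *m v = (row i M)^T ->
  beta * vnorm v <= 1 ->
  (forall j (x : 'cV_p), vnorm (D j *m x) <= tau * vnorm x) ->
  (forall j z, (k * N <= j < k * N + N)%N -> polytope Pi pi z ->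
     dotv (D j *m v) (w0 j) <= dotv (D j *m v) z) ->
  (forall j, (k * N <= j < k * N + N)%N -> vnorm (w j om - w0 j) < eps * beta / (N%:R * tau)) ->
  eps <= dotv (row i M)^T (th - thstar) ->
  ~ ThetaSet M (mu (k.+1 * N)%N om) th.
Proof.
move=> eps_gt0 beta_gt0 tau_gt0 Sv v_le D_le w0_min w_near th_far th_Theta.
have [th' [_ th'_cons th_le]] := (mu_update_ge_iff om k i ((M *m th) i 0)).1 (th_Theta i).
have := block_consistent_dotv_lt N_gt0 eps_gt0 beta_gt0 tau_gt0 Sv v_le D_le w0_min w_near th'_cons.
by move: th_le th_far; rewrite !row_mulmxE !dotvBr; lra.
Qed.

Lemma mu_div t om : mu t om = mu (t %/ N * N)%N om.
Proof.
elim: t => [|t IH]; first by rewrite div0n.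
have [N_dvd|N_ndvd] := boolP (N %| t.+1)%N; first by rewrite divnK.
rewrite mu_keep // => [|[k [_ t_eq]]]; last by rewrite t_eq dvdn_mull in N_ndvd.
by rewrite /= IH divnS // (negbTE N_ndvd) add0n.
Qed.

Lemma mu_block_le om k K i : (k <= K)%N -> mu (K * N)%N om i 0 <= mu (k * N)%N om i 0.
Proof.
elim: K => [|K IH]; first by rewrite leqn0 => /eqP ->.
rewrite leq_eqVlt => /orP [/eqP -> //|]; rewrite ltnS => /IH; apply: le_trans.
have [th [th_Theta _ mu_le]] := (mu_update_ge_iff om K i (mu (K.+1 * N) om i 0)).1 (lexx _).
exact: le_trans mu_le (th_Theta i).
Qed.

Lemma ThetaSet_mu_block om t th k : ThetaSet M (mu t om) th -> (k * N <= t)%N ->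
  ThetaSet M (mu (k * N)%N om) th.
Proof.
move=> th_Theta kN_le i; apply: le_trans (th_Theta i) _; rewrite mu_div.
by apply: mu_block_le; rewrite leq_divRL.
Qed.

Lemma ThetaSet_mu_sub_no_block_hit t i th (v : nat -> 'cV[R]_p) (w0 : nat -> 'cV[R]_nx)
    (eps beta tau : R) :
  0 < eps -> 0 < beta -> 0 < tau ->
  (forall k, (\sum_(k * N <= j < k * N + N) (D j)^T *m D j) *m v k = (row i M)^T /\
             beta * vnorm (v k) <= 1) ->
  (forall j (x : 'cV_p), vnorm (D j *m x) <= tau * vnorm x) ->
  (forall j z, polytope Pi pi z ->
     dotv (D j *m v (j %/ N)%N) (w0 j) <= dotv (D j *m v (j %/ N)%N) z) ->
  eps <= dotv (row i M)^T (th - thstar) ->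
  [set om | ThetaSet M (mu t om) th] `<=`
    no_block_hit w (fun j => [set x | vnorm (x - w0 j) < eps * beta / (N%:R * tau)])
      N (t %/ N).
Proof.
move=> eps_gt0 beta_gt0 tau_gt0 v_spec D_le w0_min th_far om th_t k /= k_lt hit.
apply: (ThetaSet_mu_excluded eps_gt0 beta_gt0 tau_gt0 (v_spec k).1 (v_spec k).2 D_le _ _ th_far).
- by move=> j z j_in; rewrite -(divn_block N_gt0 j_in); exact: w0_min.
- by move=> j j_in; apply: hit; rewrite /= mem_iota.
- by apply: ThetaSet_mu_block th_t _; rewrite -leq_divRL.
Qed.

Variable mu0 : 'cV[R]_r.
Hypothesis mu_init : forall om, mu 0 om = mu0.
Hypothesis w_rv : forall t, random_vector (w t).
Hypothesis M_bounded : forall m : 'cV[R]_r, exists C : R,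
  forall th, ThetaSet M m th -> vnorm th <= C.

(* [c <= mu ((k+1) N) om i] as a finite affine system [dotv (update_row k i x) th <=
   update_bound k om c x] (see [update_constraintP]), indexed by [None] for the objective,
   [inl l] for row [l] of [Theta (mu (k N))] and [inr (j, l)] for row [l] of the polytope
   constraint at time [k N + j]. *)
Definition update_row k i (x : option ('I_r + 'I_N * 'I_q)) : 'cV[R]_p :=
  match x with
  | None => - (row i M)^T
  | Some (inl l) => (row l M)^T
  | Some (inr (j, l)) => - ((D (k * N + j)%N)^T *m (row l Pi)^T)
  end.

Definition update_bound k om c (x : option ('I_r + 'I_N * 'I_q)) : R :=
  match x with
  | None => - c
  | Some (inl l) => mu (k * N)%N om l 0
  | Some (inr (j, l)) =>
      pi l 0 - dotv (row l Pi)^T (D (k * N + j)%N *m thstar + w (k * N + j)%N om)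
  end.

Lemma update_constraintP k om i c th :
  (forall x, dotv (update_row k i x) th <= update_bound k om c x) <->
  [/\ ThetaSet M (mu (k * N)%N om) th, block_consistent k om th & c <= (M *m th) i 0].
Proof.
have polyE j l : (Pi *m (D j *m (thstar - th) + w j om)) l 0 =
    dotv (row l Pi)^T (D j *m thstar + w j om) - dotv ((D j)^T *m (row l Pi)^T) th.
  by rewrite row_mulmxE dotv_trmx_mul -dotvBr mulmxBr addrAC.
split => [cons|[th_Theta th_cons c_le] [[l|[j l]]|] /=].
- split => [l|j /andP [j_ge j_lt] l|].
  + by have := cons (Some (inl l)); rewrite /= row_mulmxE.
  + have j'_lt : (j - k * N < N)%N by lia.
    have := cons (Some (inr (Ordinal j'_lt, l))); rewrite /= subnKC // polyE dotvNl.
    by move=> ?; lra.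
  + by have := cons None; rewrite /= dotvNl lerN2 row_mulmxE.
- by rewrite -row_mulmxE.
- have := th_cons (k * N + j)%N _ l; rewrite polyE dotvNl.
  by rewrite leq_addr ltn_add2l ltn_ord => /(_ isT) ?; lra.
- by rewrite dotvNl lerN2 -row_mulmxE.
Qed.

Lemma update_bound_measurable k c x :
  (forall l, measurable_fun setT (fun om => mu (k * N)%N om l 0)) ->
  measurable_fun setT (fun om => update_bound k om c x).
Proof.
case: x => [[l|[j l]]|] mu_meas /=; [exact: mu_meas| |exact: measurable_cst].
set g := (row l Pi)^T; set a := D (k * N + j)%N *m thstar.
apply: (random_vector_continuous (g := fun z => pi l 0 - dotv g (a + z))); first exact: w_rv.
rewrite (_ : (fun z => _) = fun z => (pi l 0 - dotv g a) - dotv g z).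
  by move=> z; apply: (@continuousB _ _ _ (fun=> _) (fun z => dotv g z));
    [exact: cst_continuous|exact: dotv_continuous].
by apply: funext => z; rewrite dotvDr opprD addrA.
Qed.

Lemma mu_block_measurable k l : measurable_fun setT (fun om => mu (k * N)%N om l 0).
Proof.
elim: k l => [|k IH] l.
  rewrite (_ : (fun om => _) = fun=> mu0 l 0); first exact: measurable_cst.
  by apply: funext => om; rewrite mul0n mu_init.
apply/measurable_fun_geP => c.
have relax_bounded om : exists C, forall th,
    (forall x, dotv (update_row k l x) th <= update_bound k om c x + 1) -> vnorm th <= C.
  have [C C_bound] := M_bounded (mu (k * N)%N om + const_mx 1).
  exists C => th th_relax; apply: C_bound => l'.
  by have := th_relax (Some (inl l')); rewrite /= -row_mulmxE !mxE.
rewrite (_ : [set om | _] = [set om | forall n, exists rq : 'cV[rat]_p, forall x,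
    dotv (update_row k l x) (map_mx ratr rq) <= update_bound k om c x + n.+1%:R^-1]).
  apply: measurable_forall => n; apply: measurable_exists => rq; apply: measurable_forall => x.
  apply: (measurable_fun_geP _).1.
  apply: measurable_realfun.measurable_funD; last exact: measurable_cst.
  exact: update_bound_measurable.
apply/seteqP; split => om /=; have [C C_bound] := relax_bounded om.
  move=> /mu_update_ge_iff [th /update_constraintP th_sol].
  by apply/(affine_feasible_ratP C_bound); exists th.
move=> /(affine_feasible_ratP C_bound) [th /update_constraintP th_sol].
by apply/mu_update_ge_iff; exists th.
Qed.

Lemma ThetaSet_mu_measurable t th : measurable [set om | ThetaSet M (mu t om) th].
Proof.
apply: measurable_forall => l; apply: (measurable_fun_geP _).1.
under eq_fun do rewrite mu_div.
exact: mu_block_measurable.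
Qed.

End Update.

Theorem theorem3
  (R : realType) (d : measure_display) (Omega : measurableType d)
  (P : probability Omega R)
  (p nx q r : nat)
  (thstar : 'cV[R]_p)
  (Pi : 'M[R]_(q, nx)) (pi : 'cV[R]_q)
  (w : nat -> Omega -> 'cV[R]_nx)
  (D : nat -> 'M[R]_(nx, p))
  (p_w : R -> R) (tau beta : R) (N_u : nat)
  (M : 'M[R]_(r, p)) (mu0 : 'cV[R]_r)
  (mu : nat -> Omega -> 'cV[R]_r)
  (* the disturbance set W *)
  (HWcompact : compact (polytope Pi pi))
  (Hpi : forall k, 0 < pi k 0)
  (* disturbances: independent random vectors with values in W *)
  (Hwrv : forall t, random_vector (w t))
  (Hwind : independent_rvecs P w)
  (HwW : forall t om, polytope Pi pi (w t om))
  (* tight disturbance bound assumption *)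
  (Hpw : forall e : R, 0 < e -> 0 < p_w e <= 1)
  (Htight : forall w0, boundary (polytope Pi pi) w0 ->
     forall e : R, 0 < e -> forall t,
     ((p_w e)%:E <= P [set om | (vnorm (w t om - w0) < e)%R])%E)
  (* persistent excitation assumption *)
  (Htau : 0 < tau) (Hbeta : 0 < beta)
  (HNu : Num.ceil ((p%:R : R) / nx%:R) <= (N_u%:Z))
  (HDnorm : forall t, opnorm2 (D t) <= tau)
  (HPE : forall t,
     psd_ge (\sum_(t <= j < t + N_u) ((D j)^T *m D j)) beta)
  (* fixed-complexity parameter set with periodic update *)
  (HMrows : forall i, vnorm (row i M) = 1)
  (HMbounded : forall m : 'cV[R]_r, exists C : R,
     forall th, ThetaSet M m th -> vnorm th <= C)
  (Hstar0 : ThetaSet M mu0 thstar)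
  (Hmu0 : forall om, mu 0 om = mu0)
  (Hmu_upd : forall om t, (exists k, (1 <= k)%N /\ t = (k * N_u)%N) ->
     forall i, is_max
       [set (M *m th) i 0 | th in
         [set th | ThetaSet M (mu (t - N_u)%N om) th /\
                   forall j, (t - N_u < j <= t)%N ->
                     Delta Pi pi D thstar w j om th]]
       (mu t om i 0))
  (Hmu_keep : forall om t, (1 <= t)%N ->
     ~ (exists k, (1 <= k)%N /\ t = (k * N_u)%N) ->
     mu t om = mu t.-1 om) :
  forall eps : R, 0 < eps ->
  forall th, ThetaSet M mu0 th ->
  (exists i, eps <= ((row i M) *m (th - thstar)) 0 0) ->
  forall t : nat,
  (P [set om | ThetaSet M (mu t om) th] <=
   ((1 - (p_w (eps * beta / (N_u%:R * tau))) ^+ N_u) ^+ (t %/ N_u))%:E)%E.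
Proof.
move=> eps eps_gt0 th _ [i th_far] t; rewrite -[row i M]trmxK -dotvE in th_far.
have p_gt0 : (0 < p)%N by apply: (vnorm_gt0_ncols (A := row i M)); rewrite HMrows.
have /andP [N_gt0 nx_gt0] := gram_sum_psd_dims p_gt0 Hbeta (HPE 0%N).
have vP k : exists v : 'cV[R]_p,
    (\sum_(k * N_u <= j < k * N_u + N_u) (D j)^T *m D j) *m v = (row i M)^T /\ beta * vnorm v <= 1.
  by rewrite -(HMrows i) -vnorm_trmx; exact: psd_ge_solve Hbeta (HPE _).
have [v v_spec] := choice vP.
have W0 : polytope Pi pi !=set0 by exists 0 => l; rewrite mulmx0 mxE ltW.
have [w0 w0_spec] := choice (fun j =>
  exists_boundary_dotv_argmin (D j *m v (j %/ N_u)%N) nx_gt0 W0 HWcompact).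
have D_le j (x : 'cV_p) : vnorm (D j *m x) <= tau * vnorm x.
  by apply: le_trans (vnorm_mulmx_opnorm2 _ _) _; rewrite ler_wpM2r ?vnorm_ge0.
have Theta_sub := ThetaSet_mu_sub_no_block_hit N_gt0 Hmu_upd Hmu_keep (t := t) eps_gt0 Hbeta Htau
  v_spec D_le (fun j => (w0_spec j).2) th_far.
set e := eps * beta / (N_u%:R * tau) in Theta_sub *.
have e_gt0 : 0 < e by rewrite divr_gt0 ?mulr_gt0 ?ltr0n.
have U_borel j : borel_cv [set x | vnorm (x - w0 j) < e].
  by apply: borel_cv_open; exact: open_vnorm_ball.
have Theta_meas := ThetaSet_mu_measurable N_gt0 Hmu_upd Hmu_keep Hmu0 Hwrv HMbounded t th.
have no_hit_meas := no_block_hit_measurable N_u U_borel Hwrv (t %/ N_u).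
apply: le_trans (le_measure P (mem_set Theta_meas) (mem_set no_hit_meas) Theta_sub) _.
apply: (no_block_hit_le N_u U_borel Hwrv Hwind) => [|j].
  by have /andP [/ltW] := Hpw _ e_gt0.
exact: Htight _ (w0_spec j).1 _ e_gt0 j.
Qed.
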